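(* Let $C_0^2=3009$. Fix integers $1\le L_0\le K_0\le n$, integers $1\le L\le K\le n$, and a constant $s_0>0$. Let $$\mathcal S=\Big\{P\in\mathcal N(n,K,L):\ \|P-P_*\|_F\ge C_0\,2^{s_0}\sqrt{\tau(n,K_0,L_0)}\Big\}.$$ Then $$\mathbb P\Big\{\sup_{P\in\mathcal S}\Big[2\langle\Xi,P-P_*\rangle-\tfrac12\|P-P_*\|_F^2-2\Delta(n,K,L)\Big]\ge 0\Big\}\le\log_2 n\cdot\exp\big(-n\cdot 2^{2s_0-7}\big).$$
   Context: Network model: $n\ge 2$ nodes; $P_*\in[0,1]^{n\times n}$ is symmetric; $A\in\{0,1\}^{n\times n}$ is symmetric with entries $A_{ij}$, $1\le i\le j\le n$, independent, $A_{ij}\sim\mathrm{Bernoulli}((P_* )_{ij})$, and $A_{ji}=A_{ij}$. Notation: - $\Xi=A-P_*$. - $\langle M,N\rangle=\mathrm{Tr}(M^TN)$. - $\tau(n,K,L)=n\ln K+K\ln L+(K^2+2nL)\ln(9nL)$. - $\Delta(n,K,L)=C_0^2\,\tau(n,K,L)+n$. Nested Block Model class: for integers $1\le L\le K\le n$, $\mathcal N(n,K,L)$ is the set of matrices $P\in[0,1]^{n\times n}$ for which there exist a clustering function $z:\{1,\dots,n\}\to\{1,\dots,K\}$, a clustering function $c:\{1,\dots,K\}\to\{1,\dots,L\}$, a matrix $B\in[0,1]^{K\times K}$ and a matrix $H\in\mathbb R_+^{n\times L}$ such that, with $n_k=\#\{i:z(i)=k\}$, $$\sum_{i:\,z(i)=k}H_{i,l}=n_k\quad\text{for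 all }k\le K,\ l\le L,$$ and $$P_{ij}=B_{z(i),z(j)}\,H_{i,c(z(j))}\,H_{j,c(z(i))}\quad\text{for all }i,j.$$ *)

From Stdlib Require Import Reals ClassicalEpsilon.
From mathcomp Require Import all_boot.
Set Implicit Arguments. Unset Strict Implicit. Unset Printing Implicit Defensive.
Open Scope R_scope.

Definition mat (n : nat) := 'I_n -> 'I_n -> R.

Definition msub n (M N : mat n) : mat n := fun i j => M i j - N i j.

Definition frob n (M : mat n) : R :=
  sqrt (\big[Rplus/0]_(i : 'I_n) \big[Rplus/0]_(j : 'I_n) (M i j * M i j)).

Definition inner n (M N : mat n) : R :=
  \big[Rplus/0]_(i : 'I_n) \big[Rplus/0]_(j : 'I_n) (M i j * N i j).

Definition in_NBM (n K L : nat) (P : mat n) : Prop :=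
  (forall i j, 0 <= P i j <= 1) /\
  exists (z : 'I_n -> 'I_K) (c : 'I_K -> 'I_L)
         (B : 'I_K -> 'I_K -> R) (H : 'I_n -> 'I_L -> R),
    (forall k l, 0 <= B k l <= 1) /\
    (forall i l, 0 <= H i l) /\
    (forall (k : 'I_K) (l : 'I_L),
        \big[Rplus/0]_(i : 'I_n | z i == k) H i l = INR #|[pred i | z i == k]|) /\
    (forall i j, P i j = B (z i) (z j) * H i (c (z j)) * H j (c (z i))).

Definition tauNBM (n K L : nat) : R :=
  INR n * ln (INR K) + INR K * ln (INR L)
  + (INR K * INR K + 2 * INR n * INR L) * ln (9 * INR n * INR L).

Definition C0sq : R := 3009.
Definition C0 : R := sqrt C0sq.

Definition DeltaNBM (n K L : nat) : R := C0sq * tauNBM n K L + INR n.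

(* Sample space: the independent upper-triangular entries A_ij, i <= j.
   A sample is a boolean function on pairs whose strictly-lower entries are
   fixed to false (canonical representative). *)
Definition sample (n : nat) := {ffun 'I_n * 'I_n -> bool}.

Definition canonical_sample n (a : sample n) : bool :=
  [forall i : 'I_n, forall j : 'I_n, (j < i)%N ==> ~~ a (i, j)].

Definition adj n (a : sample n) : mat n := fun i j =>
  if (i <= j)%N then (if a (i, j) then 1 else 0)
  else (if a (j, i) then 1 else 0).

Definition bern (p : R) (b : bool) : R := if b then p else 1 - p.

Definition weight n (Ps : mat n) (a : sample n) : R :=
  \big[Rmult/1]_(i : 'I_n) \big[Rmult/1]_(j : 'I_n | (i <= j)%N)
     bern (Ps i j) (a (i, j)).

Definition prob n (Ps : mat n) (E : mat n -> Prop) : R :=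
  \big[Rplus/0]_(a : sample n | canonical_sample a)
     (if excluded_middle_informative (E (adj a)) then weight Ps a else 0).

(* sup_{P in S} f P >= 0  (sup over a possibly empty set, -infinity if empty):
   literally, for every eps > 0 some P in S has f P > -eps. *)
Definition sup_ge0 n (S : mat n -> Prop) (f : mat n -> R) : Prop :=
  forall eps, 0 < eps -> exists P, S P /\ f P > - eps.

Definition log2 (x : R) : R := ln x / ln 2.

(* Quantizing B and H on fine grids (keeping z and c) gives a finite net of
   N(n,K,L) whose points are entrywise within 1/n^2 of every member of the
   class, and whose log-cardinality is at most 4 tau(n,K,L).  If the supremum
   is nonnegative at some P far from P_*, the linear statistic <Xi, Q - P_*>
   is large at a net point Q within 1/n^2 of P, and |Q - P_*|_F^2 is still at
   least C_0^2 4^s_0 tau(n,K_0,L_0) / 2 - 1.  For fixed Q this statistic is a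
   sum of independent centred Bernoulli variables with bounded coefficients,
   so a Chernoff bound with lambda = 1/64 gives probability at most
   exp(-|Q - P_*|_F^2 / 1024 - (Delta - 2)/64).  The term C_0^2 tau(n,K,L) in
   Delta pays for the size of the net in the union bound, and tau >= 2n turns
   the remaining exponent into n 2^(2 s_0 - 7). *)
From Stdlib Require Import Reals Lra Lia ClassicalEpsilon ZArith.
From HB Require Import structures.
From mathcomp Require Import all_boot.
Open Scope R_scope.
Set Implicit Arguments. Unset Strict Implicit. Unset Printing Implicit Defensive.

Lemma RplusA : associative Rplus. Proof. by move=> x y z; ring. Qed.
Lemma RmultA : associative Rmult. Proof. by move=> x y z; ring. Qed.
Lemma RmultDl : left_distributive Rmult Rplus. Proof. by move=> x y z; ring. Qed.
Lemma RmultDr : right_distributive Rmult Rplus. Proof. by move=> x y z; ring. Qed.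

HB.instance Definition _ := Monoid.isComLaw.Build R 0 Rplus RplusA Rplus_comm Rplus_0_l.
HB.instance Definition _ := Monoid.isComLaw.Build R 1 Rmult RmultA Rmult_comm Rmult_1_l.
HB.instance Definition _ := Monoid.isMulLaw.Build R 0 Rmult Rmult_0_l Rmult_0_r.
HB.instance Definition _ := Monoid.isAddLaw.Build R Rmult Rplus RmultDl RmultDr.

Section RealBigops.
Variable I : finType.

Lemma leR_sum (P : pred I) (F G : I -> R) :
  (forall i, P i -> F i <= G i) ->
  \big[Rplus/0]_(i | P i) F i <= \big[Rplus/0]_(i | P i) G i.
Proof. by move=> h; apply: (big_ind2 (fun x y => x <= y)) => //; [lra | move=> *; lra]. Qed.

Lemma sumR_ge0 (P : pred I) (F : I -> R) :
  (forall i, P i -> 0 <= F i) -> 0 <= \big[Rplus/0]_(i | P i) F i.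
Proof. by move=> h; apply: (big_ind (fun x => 0 <= x)) => //; [lra | move=> *; lra]. Qed.

Lemma sumR_const (c : R) : \big[Rplus/0]_(i : I) c = INR #|I| * c.
Proof.
rewrite big_const; elim: #|I| => [|k IH]; first by rewrite /=; lra.
by rewrite iterS IH S_INR; lra.
Qed.

Lemma leR_sum_term (P : pred I) (F : I -> R) j :
  P j -> (forall i, P i -> 0 <= F i) -> F j <= \big[Rplus/0]_(i | P i) F i.
Proof.
move=> Pj h; rewrite (bigD1 j Pj) /=.
have : 0 <= \big[Rplus/0]_(i | P i && (i != j)) F i.
  by apply: sumR_ge0 => i /andP [] /h.
lra.
Qed.

Lemma leR_prod (P : pred I) (F G : I -> R) :
  (forall i, P i -> 0 <= F i <= G i) ->
  0 <= \big[Rmult/1]_(i | P i) F i <= \big[Rmult/1]_(i | P i) G i.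
Proof.
move=> h; apply: (big_ind2 (fun x y => 0 <= x <= y)) => //; first lra.
move=> x1 x2 y1 y2 [h1 h2] [h3 h4]; split; first exact: Rmult_le_pos.
by apply: Rmult_le_compat; lra.
Qed.

Lemma exp_sum (P : pred I) (F : I -> R) :
  exp (\big[Rplus/0]_(i | P i) F i) = \big[Rmult/1]_(i | P i) exp (F i).
Proof. exact: (big_morph exp exp_plus exp_0). Qed.

End RealBigops.

Lemma Rle_exp x y : x <= y -> exp x <= exp y.
Proof. by case/Rle_lt_or_eq_dec => [h|->]; [left; exact: exp_increasing | lra]. Qed.

Lemma Rle_ln x y : 0 < x -> x <= y -> ln x <= ln y.
Proof. by move=> hx; case/Rle_lt_or_eq_dec => [h|->]; [left; exact: ln_increasing | lra]. Qed.

Lemma ln_ge0 x : 1 <= x -> 0 <= ln x.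
Proof. by move=> hx; rewrite -ln_1; apply: Rle_ln; lra. Qed.

Lemma INR_ge1 k : (1 <= k)%N -> 1 <= INR k.
Proof. by move=> h; apply: (le_INR 1); apply/leP. Qed.

Lemma INR_muln a b : INR (a * b)%N = INR a * INR b.
Proof. by rewrite -mult_INR. Qed.

Lemma INR_expn a k : INR (a ^ k)%N = INR a ^ k.
Proof. by elim: k => [|k IH]; rewrite ?expn0 // expnS INR_muln IH. Qed.

Definition sqsum n (M : mat n) : R :=
  \big[Rplus/0]_(i : 'I_n) \big[Rplus/0]_(j : 'I_n) (M i j * M i j).

Lemma sqsum_ge0 n (M : mat n) : 0 <= sqsum M.
Proof. by apply: sumR_ge0 => i _; apply: sumR_ge0 => j _; apply: Rle_0_sqr. Qed.

Lemma frob_sq n (M : mat n) : frob M ^ 2 = sqsum M.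
Proof. by rewrite /frob /= Rmult_1_r sqrt_sqrt //; apply: sqsum_ge0. Qed.

Lemma dsum_le_affine n (F G : 'I_n -> 'I_n -> R) a b :
  0 <= a -> (forall i j, F i j <= a * G i j + b) ->
  \big[Rplus/0]_(i : 'I_n) \big[Rplus/0]_(j : 'I_n) F i j <=
  a * (\big[Rplus/0]_(i : 'I_n) \big[Rplus/0]_(j : 'I_n) G i j) + INR n * INR n * b.
Proof.
move=> ha h.
apply: Rle_trans (_ : _ <= \big[Rplus/0]_(i : 'I_n) \big[Rplus/0]_(j : 'I_n) (a * G i j + b)) _.
  by apply: leR_sum => i _; apply: leR_sum => j _; apply: h.
under eq_bigr => i _ do rewrite big_split /= -big_distrr /= sumR_const card_ord.
by rewrite big_split /= sumR_const card_ord big_distrr /=; lra.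
Qed.

Lemma sqsum_close n (X Y : mat n) eps :
  (forall i j, Rabs (X i j - Y i j) <= eps) ->
  sqsum X <= 2 * sqsum Y + INR n * INR n * (2 * eps ^ 2).
Proof.
move=> h; apply: dsum_le_affine; first lra.
move=> i j; have hd := h i j; have := Rabs_pos (X i j - Y i j).
have : (X i j - Y i j) * (X i j - Y i j) <= eps ^ 2 by split_Rabs; nra.
have := Rle_0_sqr (X i j - 2 * Y i j); rewrite /Rsqr; nra.
Qed.

Lemma inner_close n (Z X Y : mat n) eps :
  (forall i j, Rabs (Z i j) <= 1) -> (forall i j, Rabs (X i j - Y i j) <= eps) ->
  inner Z X <= inner Z Y + INR n * INR n * eps.
Proof.
move=> hZ h; rewrite -[inner Z Y]Rmult_1_l; apply: dsum_le_affine; first lra.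
move=> i j; have hz := hZ i j; have hd := h i j.
have : Rabs (Z i j * (X i j - Y i j)) <= eps.
  rewrite Rabs_mult; have := Rabs_pos (Z i j); have := Rabs_pos (X i j - Y i j); nra.
move/(Rle_trans _ _ _ (Rle_abs _)); lra.
Qed.

(** * The probability space of upper triangles *)

Lemma dsum_upper_pairs n (phi : 'I_n -> 'I_n -> R) :
  \big[Rplus/0]_(i : 'I_n) \big[Rplus/0]_(j : 'I_n) phi i j =
  \big[Rplus/0]_(p : 'I_n * 'I_n | (p.1 <= p.2)%N)
     (phi p.1 p.2 + (if p.1 == p.2 then 0 else phi p.2 p.1)).
Proof.
rewrite pair_big /= (bigID (fun p : 'I_n * 'I_n => (p.1 <= p.2)%N)) /=.
rewrite big_split /=; congr (_ + _).
have swapK : involutive (fun p : 'I_n * 'I_n => (p.2, p.1)) by case.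
rewrite (reindex_inj (inv_inj swapK)) /=.
rewrite big_mkcond [in RHS]big_mkcond /=; apply: eq_bigr => [[i j]] _ /=.
by rewrite -val_eqE /=; case: ltngtP.
Qed.

Lemma weight_pairs n (Ps : mat n) (a : sample n) :
  weight Ps a = \big[Rmult/1]_(p : 'I_n * 'I_n | (p.1 <= p.2)%N) bern (Ps p.1 p.2) (a p).
Proof. by rewrite /weight pair_big_dep /=; apply: eq_bigr => [[i j]]. Qed.

Lemma weight_ge0 n (Ps : mat n) a :
  (forall i j, 0 <= Ps i j <= 1) -> 0 <= weight Ps a.
Proof.
move=> hr; rewrite weight_pairs; apply: (big_ind (fun x => 0 <= x)); try lra.
  by move=> x y; apply: Rmult_le_pos.
by move=> [i j] _; rewrite /bern /=; have := hr i j; case: (a (i, j)); lra.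
Qed.

(* This is where the independence of the entries A_ij, i <= j, enters. *)
Lemma sum_canonical_prod n (G : 'I_n * 'I_n -> bool -> R) :
  \big[Rplus/0]_(a : sample n | canonical_sample a)
     \big[Rmult/1]_(p : 'I_n * 'I_n | (p.1 <= p.2)%N) G p (a p)
  = \big[Rmult/1]_(p : 'I_n * 'I_n | (p.1 <= p.2)%N) (G p true + G p false).
Proof.
pose G' (p : 'I_n * 'I_n) (b : bool) :=
  if (p.1 <= p.2)%N then G p b else (if b then 0 else 1).
have -> : \big[Rmult/1]_(p : 'I_n * 'I_n | (p.1 <= p.2)%N) (G p true + G p false)
   = \big[Rmult/1]_(p : 'I_n * 'I_n) \big[Rplus/0]_(b : bool) G' p b.
  rewrite big_mkcond /=; apply: eq_bigr => p _; rewrite big_bool /G' /=.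
  by case: ifP => _ //; lra.
rewrite bigA_distr_bigA /= [in RHS](bigID (@canonical_sample n)) /=.
rewrite [X in _ = _ + X]big1 ?Rplus_0_r.
  apply: eq_bigr => a can; rewrite [in LHS]big_mkcond /=; apply: eq_bigr => p _.
  rewrite /G'; case: ifP => // hle.
  move/forallP: can => /(_ p.1) /forallP /(_ p.2).
  rewrite ltnNge hle /= => /negbTE.
  by case: p hle => i j /= _ ->.
move=> a /forallPn [i] /forallPn [j]; rewrite negb_imply negbK => /andP [hji hij].
by rewrite (bigD1 (i, j)) //= /G' /= leqNgt hji /= hij; lra.
Qed.

Section Probability.
Variables (n : nat) (Ps : mat n).
Hypothesis Ps_range : forall i j, 0 <= Ps i j <= 1.

Lemma prob_le (E F : mat n -> Prop) :
  (forall a : sample n, E (adj a) -> F (adj a)) -> prob Ps E <= prob Ps F.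
Proof.
move=> h; apply: leR_sum => a _; have := weight_ge0 a Ps_range.
case: excluded_middle_informative => hE; case: excluded_middle_informative => hF //=; try lra.
by case: hF; apply: h.
Qed.

Lemma prob_union (T : finType) (E : mat n -> Prop) (Et : T -> mat n -> Prop) :
  (forall a : sample n, E (adj a) -> exists t, Et t (adj a)) ->
  prob Ps E <= \big[Rplus/0]_(t : T) prob Ps (Et t).
Proof.
move=> h; rewrite /prob exchange_big /=; apply: leR_sum => a _.
have hw := weight_ge0 a Ps_range.
have hterm t : 0 <= if excluded_middle_informative (Et t (adj a)) then weight Ps a else 0.
  by case: excluded_middle_informative => //= _; exact: Rle_refl.
case: excluded_middle_informative => hE /=; last exact: sumR_ge0.
have [t ht] := h a hE.
apply: Rle_trans (leR_sum_term (P := predT) (j := t) _ (fun t _ => hterm t)) => //.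
by case: excluded_middle_informative => //= _; exact: Rle_refl.
Qed.

End Probability.

(** * A Chernoff bound for linear statistics of A - P_* *)

Lemma exp_le_quadratic y : y <= / 2 -> exp y <= 1 + y + 2 * y ^ 2.
Proof.
move=> hy.
have he : exp y = / exp (- y) by rewrite exp_Ropp Rinv_inv.
rewrite he; apply: Rle_trans (_ : _ <= / (1 - y)) _.
  by apply: Rinv_le_contravar; have := exp_ineq1_le (- y); lra.
apply: (Rmult_le_reg_l (1 - y)); first lra.
rewrite Rinv_r; last lra.
have : 0 <= y ^ 2 * (1 - 2 * y) by apply: Rmult_le_pos; nra.
nra.
Qed.

Definition centered (q : R) (b : bool) : R := (if b then 1 else 0) - q.

Lemma bern_mgf_le q u : 0 <= q <= 1 -> Rabs u <= / 2 ->
  bern q true * exp (u * centered q true) + bern q false * exp (u * centered q false)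
  <= exp (2 * u ^ 2).
Proof.
move=> hq hu; rewrite /bern /centered.
have hu' : - / 2 <= u <= / 2 by split_Rabs; lra.
have e1 := @exp_le_quadratic (u * (1 - q)) ltac:(nra).
have e2 := @exp_le_quadratic (u * (0 - q)) ltac:(nra).
have e3 := exp_ineq1_le (2 * u ^ 2).
have : q * exp (u * (1 - q)) <= q * (1 + u * (1 - q) + 2 * (u * (1 - q)) ^ 2)
  by apply: Rmult_le_compat_l; lra.
have : (1 - q) * exp (u * (0 - q)) <= (1 - q) * (1 + u * (0 - q) + 2 * (u * (0 - q)) ^ 2)
  by apply: Rmult_le_compat_l; lra.
have : 0 <= u ^ 2 * (q * q) by nra.
nra.
Qed.

(* Coefficient of the independent entry A_ij (i <= j) in <A - P_*, D>. *)
Definition sym_coef n (D : mat n) (p : 'I_n * 'I_n) : R :=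
  D p.1 p.2 + (if p.1 == p.2 then 0 else D p.2 p.1).

Lemma inner_pairs n (Ps D : mat n) (a : sample n) :
  (forall i j, Ps i j = Ps j i) ->
  inner (msub (adj a) Ps) D =
  \big[Rplus/0]_(p : 'I_n * 'I_n | (p.1 <= p.2)%N)
     (sym_coef D p * centered (Ps p.1 p.2) (a p)).
Proof.
move=> hs; rewrite /inner dsum_upper_pairs; apply: eq_bigr => [[i j]] /= hle.
rewrite /sym_coef /msub /adj /centered /= hle.
case: (eqVneq i j) => [<-|hne]; first ring.
have -> : (j <= i)%N = false.
  apply/negbTE; rewrite -ltnNge ltn_neqAle hle andbT.
  by apply: contra hne => /eqP h; apply/eqP/val_inj.
by rewrite (hs j i); ring.
Qed.

Lemma sum_sym_coef_sq n (D : mat n) :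
  \big[Rplus/0]_(p : 'I_n * 'I_n | (p.1 <= p.2)%N) (sym_coef D p ^ 2) <= 2 * sqsum D.
Proof.
rewrite /sqsum dsum_upper_pairs big_distrr /=; apply: leR_sum => [[i j]] _ /=.
rewrite /sym_coef /=; have := Rle_0_sqr (D i j - D j i); have := Rle_0_sqr (D i j).
by case: (i == j); rewrite /Rsqr; nra.
Qed.

Lemma sym_coef_bound n (D : mat n) p :
  (forall i j, Rabs (D i j) <= 2) -> Rabs (sym_coef D p) <= 4.
Proof.
move=> hD; rewrite /sym_coef; apply: Rle_trans (Rabs_triang _ _) _.
by have := hD p.1 p.2; have := hD p.2 p.1; case: (p.1 == p.2); rewrite ?Rabs_R0; lra.
Qed.

Section Chernoff.
Variables (n : nat) (Ps D : mat n).
Hypothesis Ps_sym : forall i j, Ps i j = Ps j i.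
Hypothesis Ps_range : forall i j, 0 <= Ps i j <= 1.

Definition mgf (lam : R) : R :=
  \big[Rplus/0]_(a : sample n | canonical_sample a)
    (weight Ps a * exp (lam * inner (msub (adj a) Ps) D)).

Lemma prob_le_mgf s lam : 0 <= lam ->
  prob Ps (fun A => inner (msub A Ps) D >= s) <= exp (- (lam * s)) * mgf lam.
Proof.
move=> hl; rewrite /prob /mgf big_distrr /=; apply: leR_sum => a _.
have hw := weight_ge0 a Ps_range.
set X := inner (msub (adj a) Ps) D.
have hpos : 0 <= exp (- (lam * s)) * (weight Ps a * exp (lam * X)).
  by apply: Rmult_le_pos; [left; apply: exp_pos | apply: Rmult_le_pos => //; left; apply: exp_pos].
case: excluded_middle_informative => //= hX.
have : 1 <= exp (- (lam * s)) * exp (lam * X).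
  rewrite -exp_plus; have := exp_ineq1_le (- (lam * s) + lam * X).
  have : 0 <= lam * (X - s) by apply: Rmult_le_pos; lra.
  lra.
nra.
Qed.

Lemma mgf_le lam : 0 <= lam <= / 8 -> (forall i j, Rabs (D i j) <= 2) ->
  mgf lam <= exp (4 * lam ^ 2 * sqsum D).
Proof.
move=> hl hD.
pose G (p : 'I_n * 'I_n) (b : bool) :=
  bern (Ps p.1 p.2) b * exp (lam * (sym_coef D p * centered (Ps p.1 p.2) b)).
have -> : mgf lam = \big[Rmult/1]_(p : 'I_n * 'I_n | (p.1 <= p.2)%N) (G p true + G p false).
  rewrite -sum_canonical_prod; apply: eq_bigr => a _.
  by rewrite /G big_split /= -weight_pairs -exp_sum -big_distrr /= -inner_pairs.
apply: Rle_trans (_ : _ <= \big[Rmult/1]_(p : 'I_n * 'I_n | (p.1 <= p.2)%N)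
     exp (2 * (lam * sym_coef D p) ^ 2)) _.
  apply: (proj2 (leR_prod _)) => [[i j]] _; split.
    rewrite /G /bern /=; have := Ps_range i j.
    have := exp_pos (lam * (sym_coef D (i, j) * centered (Ps i j) true)).
    have := exp_pos (lam * (sym_coef D (i, j) * centered (Ps i j) false)).
    rewrite /centered /=; nra.
  have hu : Rabs (lam * sym_coef D (i, j)) <= / 2.
    rewrite Rabs_mult Rabs_pos_eq; last lra.
    have := sym_coef_bound (i, j) hD; have := Rabs_pos (sym_coef D (i, j)); nra.
  by have := bern_mgf_le (Ps_range i j) hu; rewrite /G /= -!Rmult_assoc.
rewrite -exp_sum; apply: Rle_exp.
have -> : \big[Rplus/0]_(p : 'I_n * 'I_n | (p.1 <= p.2)%N) (2 * (lam * sym_coef D p) ^ 2)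
    = 2 * lam ^ 2 * \big[Rplus/0]_(p : 'I_n * 'I_n | (p.1 <= p.2)%N) (sym_coef D p ^ 2).
  by rewrite big_distrr /=; apply: eq_bigr => p _; ring.
have := sum_sym_coef_sq D; have : 0 <= lam ^ 2 by nra.
nra.
Qed.

Lemma chernoff s lam : 0 <= lam <= / 8 -> (forall i j, Rabs (D i j) <= 2) ->
  prob Ps (fun A => inner (msub A Ps) D >= s) <= exp (- (lam * s) + 4 * lam ^ 2 * sqsum D).
Proof.
move=> hl hD; apply: Rle_trans (prob_le_mgf s (proj1 hl)) _.
rewrite exp_plus; apply: Rmult_le_compat_l; first by left; apply: exp_pos.
exact: mgf_le.
Qed.

End Chernoff.

(** * A finite net for the Nested Block Model *)

Lemma floor_grid x step N : 0 <= x -> 0 < step -> x <= INR N * step ->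
  exists k : 'I_N.+1, INR k * step <= x < INR k * step + step.
Proof.
move=> hx hs hN.
have [h1 h2] := base_Int_part (x / step).
have hxs : 0 <= x / step by apply: Rmult_le_pos => //; left; apply: Rinv_0_lt_compat.
have hz : (0 <= Int_part (x / step))%Z.
  have : (-1 < Int_part (x / step))%Z by apply: lt_IZR; lra.
  lia.
set k := Z.to_nat (Int_part (x / step)).
have hk : INR k = IZR (Int_part (x / step)) by rewrite INR_IZR_INZ /k Z2Nat.id.
have e : x = x / step * step by field; lra.
have hkx : INR k * step <= x by rewrite e; apply: Rmult_le_compat_r; lra.
have hkN : (k < N.+1)%N.
  rewrite ltnS; apply/leP; apply: INR_le.
  by apply: (Rmult_le_reg_r step) => //; lra.
exists (Ordinal hkN) => /=; split => //.
rewrite e; have : x / step < INR k + 1 by lra.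
nra.
Qed.

Lemma triple_product_approx b b' h1 h1' h2 h2' beta eta N :
  0 <= b' <= b -> b <= 1 -> b - b' <= beta ->
  0 <= h1' <= h1 -> h1 <= N -> h1 - h1' <= eta ->
  0 <= h2' <= h2 -> h2 <= N -> h2 - h2' <= eta ->
  Rabs (b * h1 * h2 - b' * h1' * h2') <= beta * N ^ 2 + 2 * N * eta.
Proof.
move=> hb hb1 hbb hh1 hN1 he1 hh2 hN2 he2.
have -> : b * h1 * h2 - b' * h1' * h2' =
  (b - b') * (h1 * h2) + b' * ((h1 - h1') * h2) + b' * h1' * (h2 - h2') by ring.
have t1 : 0 <= (b - b') * (h1 * h2) <= beta * N ^ 2.
  by split; [apply: Rmult_le_pos; nra | apply: Rmult_le_compat; nra].
have t2 : 0 <= b' * ((h1 - h1') * h2) <= N * eta.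
  have : (h1 - h1') * h2 <= eta * N by apply: Rmult_le_compat; lra.
  have : 0 <= (h1 - h1') * h2 by apply: Rmult_le_pos; lra.
  nra.
have t3 : 0 <= b' * h1' * (h2 - h2') <= N * eta.
  have : b' * h1' <= 1 * N by apply: Rmult_le_compat; lra.
  have : 0 <= b' * h1' by nra.
  nra.
by rewrite Rabs_pos_eq; lra.
Qed.

Definition gridB n := (2 * n ^ 4)%N.
Definition gridH n := (4 * n ^ 4)%N.
Definition stepB n := / (2 * INR n ^ 4).
Definition stepH n := / (4 * INR n ^ 3).

Notation net_index n K L := (({ffun 'I_n -> 'I_K} * {ffun 'I_K -> 'I_L}) *
   ({ffun 'I_K * 'I_K -> 'I_(gridB n).+1} * {ffun 'I_n * 'I_L -> 'I_(gridH n).+1}))%type.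

Definition net_point n K L (t : net_index n K L) : mat n := fun i j =>
  (INR (t.2.1 (t.1.1 i, t.1.1 j)) * stepB n) *
  (INR (t.2.2 (i, t.1.2 (t.1.1 j))) * stepH n) *
  (INR (t.2.2 (j, t.1.2 (t.1.1 i))) * stepH n).

Lemma NBM_H_le n K L (z : 'I_n -> 'I_K) (H : 'I_n -> 'I_L -> R) :
  (forall i l, 0 <= H i l) ->
  (forall (k : 'I_K) (l : 'I_L),
      \big[Rplus/0]_(i : 'I_n | z i == k) H i l = INR #|[pred i | z i == k]|) ->
  forall i l, H i l <= INR n.
Proof.
move=> hH hsum i l.
apply: Rle_trans (_ : _ <= \big[Rplus/0]_(i' : 'I_n | z i' == z i) H i' l) _.
  exact: (leR_sum_term (P := fun i' => z i' == z i)).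
rewrite hsum; apply: le_INR; apply/leP.
by apply: leq_trans (max_card _) _; rewrite card_ord.
Qed.

Lemma NBM_net_approx n K L (P : mat n) : (1 <= n)%N -> in_NBM K L P ->
  exists t : net_index n K L, forall i j, Rabs (P i j - net_point t i j) <= / INR n ^ 2.
Proof.
move=> hn [_ [z [c [B [H [hB [hH [hsum hP]]]]]]]].
have hn0 : 0 < INR n by apply: lt_0_INR; apply/ltP.
have hHn := NBM_H_le hH hsum.
have hstepB : 0 < stepB n by apply: Rinv_0_lt_compat; have := pow_lt _ 4 hn0; lra.
have hstepH : 0 < stepH n by apply: Rinv_0_lt_compat; have := pow_lt _ 3 hn0; lra.
have hexB (p : 'I_K * 'I_K) : exists k : 'I_(gridB n).+1,
    INR k * stepB n <= B p.1 p.2 < INR k * stepB n + stepB n.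
  apply: floor_grid => //; first by have := hB p.1 p.2; lra.
  rewrite /gridB INR_muln INR_expn /stepB /= Rinv_r; first by have := hB p.1 p.2; lra.
  by have := pow_lt _ 4 hn0; lra.
have hexH (p : 'I_n * 'I_L) : exists k : 'I_(gridH n).+1,
    INR k * stepH n <= H p.1 p.2 < INR k * stepH n + stepH n.
  apply: floor_grid => //.
  rewrite /gridH INR_muln INR_expn /stepH (_ : INR 4 = 4); last by simpl; lra.
  have -> : 4 * INR n ^ 4 * / (4 * INR n ^ 3) = INR n by field; lra.
  exact: hHn.
have [kB hkB] := fin_all_exists hexB.
have [kH hkH] := fin_all_exists hexH.
exists (([ffun i => z i], [ffun k => c k]), ([ffun p => kB p], [ffun p => kH p])) => i j.
rewrite /net_point /= !ffunE hP.
(* The grid steps are tuned so that the three quantization errors add up to 1/n^2. *)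
have -> : / INR n ^ 2 = stepB n * INR n ^ 2 + 2 * INR n * stepH n.
  by rewrite /stepB /stepH; field; lra.
have [b1 b2] := hkB (z i, z j).
have [h1 h2] := hkH (i, c (z j)).
have [h3 h4] := hkH (j, c (z i)).
have kpos (m : nat) s : 0 < s -> 0 <= INR m * s.
  by move=> hs; apply: Rmult_le_pos; [apply: pos_INR | lra].
simpl in b1, b2, h1, h2, h3, h4.
apply: triple_product_approx; try split; try lra; try exact: hHn; try exact: kpos.
by have := hB (z i) (z j); lra.
Qed.

Lemma card_net_index n K L : INR #|{: net_index n K L}| =
  INR K ^ n * INR L ^ K * (2 * INR n ^ 4 + 1) ^ (K * K) * (4 * INR n ^ 4 + 1) ^ (n * L).
Proof.
rewrite !(card_prod, card_ffun, card_ord) !INR_muln !INR_expn /gridB /gridH.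
rewrite !S_INR ?INR_muln ?INR_expn -Rmult_assoc.
by congr (_ * _ ^ _ * _ ^ _); simpl; ring.
Qed.

Section NetSize.
Variables n K L : nat.
Hypotheses (hn : (1 <= n)%N) (hK : (1 <= K)%N) (hL : (1 <= L)%N).

Lemma card_net_index_gt0 : 0 < INR #|{: net_index n K L}|.
Proof.
rewrite card_net_index.
have := INR_ge1 hn; have := INR_ge1 hL; have := INR_ge1 hK => h1 h2 h3.
have := pow_lt _ 4 (ltac:(lra) : 0 < INR n) => h4.
by repeat apply: Rmult_lt_0_compat; apply: pow_lt; lra.
Qed.

Lemma ln_card_net_index : ln (INR #|{: net_index n K L}|) <= 4 * tauNBM n K L.
Proof.
rewrite card_net_index.
have hN := INR_ge1 hn; have hLL := INR_ge1 hL; have hKK := INR_ge1 hK.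
set N := INR n in hN *; set LL := INR L in hLL *; set KK := INR K in hKK *.
have hN4 : 1 <= N ^ 4 by apply: pow_R1_Rle.
have hL4 : 1 <= LL ^ 4 by apply: pow_R1_Rle.
have h9 : 0 < 9 * N * LL by nra.
have hl : ln (4 * N ^ 4 + 1) <= 4 * ln (9 * N * LL).
  rewrite (_ : 4 * ln (9 * N * LL) = INR 4 * ln (9 * N * LL)); last by simpl; ring.
  rewrite -(@ln_pow _ h9); apply: Rle_ln; first lra.
  by rewrite (_ : (9 * N * LL) ^ 4 = 6561 * N ^ 4 * LL ^ 4); [nra | ring].
have hl' : ln (2 * N ^ 4 + 1) <= 4 * ln (9 * N * LL).
  by apply: Rle_trans hl; apply: Rle_ln; lra.
have hl0 : 0 <= ln (9 * N * LL) by apply: ln_ge0; nra.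
have hlK : 0 <= ln KK by apply: ln_ge0.
have hlL : 0 <= ln LL by apply: ln_ge0.
rewrite !ln_mult; try (apply: pow_lt; lra); try (apply: Rmult_lt_0_compat; apply: pow_lt; lra);
  try (repeat apply: Rmult_lt_0_compat; apply: pow_lt; lra).
rewrite !ln_pow; try lra.
rewrite !INR_muln -/N -/KK -/LL /tauNBM -/N -/KK -/LL.
have t1 : KK * KK * ln (2 * N ^ 4 + 1) <= KK * KK * (4 * ln (9 * N * LL)).
  by apply: Rmult_le_compat_l => //; nra.
have t2 : N * LL * ln (4 * N ^ 4 + 1) <= N * LL * (4 * ln (9 * N * LL)).
  by apply: Rmult_le_compat_l => //; nra.
have t3 : 0 <= N * ln KK by nra.
have t4 : 0 <= KK * ln LL by nra.
have t5 : 0 <= N * LL * ln (9 * N * LL) by apply: Rmult_le_pos => //; nra.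
lra.
Qed.

Lemma tauNBM_ge2n : 2 * INR n <= tauNBM n K L.
Proof.
rewrite /tauNBM.
have hN := INR_ge1 hn; have hLL := INR_ge1 hL; have hKK := INR_ge1 hK.
have h1 := ln_ge0 hKK; have h2 := ln_ge0 hLL.
have h3 : 1 <= ln (9 * INR n * INR L).
  rewrite -{1}(ln_exp 1); apply: Rle_ln; first exact: exp_pos.
  by have := exp_le_3; nra.
have := Rmult_le_pos _ _ (pos_INR n) h1.
have := Rmult_le_pos _ _ (pos_INR K) h2.
have : INR K * INR K * 1 <= INR K * INR K * ln (9 * INR n * INR L)
  by apply: Rmult_le_compat_l; nra.
have : 2 * INR n * INR L * 1 <= 2 * INR n * INR L * ln (9 * INR n * INR L)
  by apply: Rmult_le_compat_l; nra.
nra.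
Qed.

End NetSize.

(* What a nonnegative supremum at P forces at the net point Q of P, after
   absorbing the 1/n^2 approximation errors. *)
Definition net_deviation n (Ps Q : mat n) (r Dl : R) (A : mat n) : Prop :=
  r <= sqsum (msub Q Ps) /\ (forall i j, Rabs (msub Q Ps i j) <= 2) /\
  inner (msub A Ps) (msub Q Ps) >= (sqsum (msub Q Ps) / 4 + 2 * Dl - 4) / 2.

Lemma prob_net_deviation n (Ps Q : mat n) (r Dl : R) :
  (forall i j, Ps i j = Ps j i) -> (forall i j, 0 <= Ps i j <= 1) ->
  prob Ps (net_deviation Ps Q r Dl) <= exp (- (r / 1024) - (Dl - 2) / 64).
Proof.
move=> hs hr.
have [[hfar hbd]|hno] :=
  classic (r <= sqsum (msub Q Ps) /\ forall i j, Rabs (msub Q Ps i j) <= 2); last first.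
  rewrite /prob big1 => [|a _]; first by left; apply: exp_pos.
  case: excluded_middle_informative => //= hE.
  by case: hno; case: hE => [h1 [h2 _]].
set s := (sqsum (msub Q Ps) / 4 + 2 * Dl - 4) / 2.
apply: Rle_trans (prob_le hr (F := fun A => inner (msub A Ps) (msub Q Ps) >= s) _) _.
  by move=> a [_ []].
apply: Rle_trans (chernoff hs hr s (lam := / 64) _ hbd) _; first lra.
by apply: Rle_exp; rewrite /s; lra.
Qed.

Lemma net_deviation_of_sup n K L (Ps : mat n) (Dl d : R) (a : sample n) :
  (1 <= n)%N -> (forall i j, 0 <= Ps i j <= 1) -> 0 <= d ->
  sup_ge0 (fun P => in_NBM K L P /\ frob (msub P Ps) >= d)
    (fun P => 2 * inner (msub (adj a) Ps) (msub P Ps) - / 2 * frob (msub P Ps) ^ 2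
              - 2 * Dl) ->
  exists t : net_index n K L, net_deviation Ps (net_point t) (d * d / 2 - 1) Dl (adj a).
Proof.
move=> hn hr hd hsup.
have [P [[hP hfar] hf]] := hsup 1 Rlt_0_1.
have [t ht] := NBM_net_approx hn hP.
exists t.
set DP := msub P Ps; set DQ := msub (net_point t) Ps.
have hN := INR_ge1 hn; set eps := / INR n ^ 2 in ht.
have heps : INR n * INR n * eps = 1 by rewrite /eps; field; lra.
have heps1 : eps <= 1 by rewrite /eps -(Rinv_1); apply: Rinv_le_contravar; nra.
have hPQ i j : Rabs (DP i j - DQ i j) <= eps.
  by rewrite /DP /DQ /msub (_ : _ - _ = P i j - net_point t i j) //; ring.
have hQP i j : Rabs (DQ i j - DP i j) <= eps by rewrite Rabs_minus_sym.
have hXi i j : Rabs (msub (adj a) Ps i j) <= 1.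
  by have := hr i j; rewrite /msub /adj; case: ifP => _; case: (a _); split_Rabs; lra.
have hQ := sqsum_close hQP; have hP' := sqsum_close hPQ.
have hinner := inner_close hXi hPQ.
have heps2 : INR n * INR n * (2 * eps ^ 2) <= 2 by rewrite (_ : _ * _ = 2 * eps * (INR n * INR n * eps)); [nra | ring].
rewrite frob_sq -/DP in hf.
have hdP : d * d <= sqsum DP.
  have hfarDP : frob DP >= d := hfar.
  by rewrite -frob_sq /= Rmult_1_r; apply: Rmult_le_compat; lra.
rewrite /net_deviation -/DQ; split; [|split].
- lra.
- move=> i j; have := hPQ i j; have := hP.1 i j; have := hr i j.
  by rewrite /DP /DQ /msub; split_Rabs; lra.
- lra.
Qed.

Lemma card_net_index_le n K L : (1 <= n)%N -> (1 <= K)%N -> (1 <= L)%N ->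
  INR #|{: net_index n K L}| <= exp ((DeltaNBM n K L - 2) / 64).
Proof.
move=> hn hK hL.
rewrite -(exp_ln _ (card_net_index_gt0 hn hK hL)); apply: Rle_exp.
apply: Rle_trans (ln_card_net_index hn hK hL) _.
have := tauNBM_ge2n hn hK hL; have := INR_ge1 hn; rewrite /DeltaNBM /C0sq; lra.
Qed.

Lemma rate_le_radius n K0 L0 s0 d : (1 <= n)%N -> (1 <= K0)%N -> (1 <= L0)%N -> 0 <= s0 ->
  d = C0 * Rpower 2 s0 * sqrt (tauNBM n K0 L0) ->
  INR n * Rpower 2 (2 * s0 - 7) <= (d * d / 2 - 1) / 1024.
Proof.
move=> hn hK0 hL0 hs0 ->.
have htau := tauNBM_ge2n hn hK0 hL0; have hN := INR_ge1 hn.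
have h4 : 1 <= Rpower 2 (2 * s0).
  by have := Rle_Rpower 2 0 (2 * s0) ltac:(lra) ltac:(lra); rewrite Rpower_O //; lra.
have hdd : C0 * Rpower 2 s0 * sqrt (tauNBM n K0 L0) * (C0 * Rpower 2 s0 * sqrt (tauNBM n K0 L0)) = 3009 * Rpower 2 (2 * s0) * tauNBM n K0 L0.
  rewrite /C0 /C0sq (_ : 2 * s0 = s0 + s0) ?Rpower_plus; last ring.
  have e1 := sqrt_sqrt 3009 ltac:(lra).
  have e2 := sqrt_sqrt (tauNBM n K0 L0) ltac:(lra).
  by rewrite -{3}e1 -{3}e2; ring.
have -> : Rpower 2 (2 * s0 - 7) = Rpower 2 (2 * s0) / 128.
  rewrite /Rminus Rpower_plus Rpower_Ropp (_ : 7 = INR 7); last by simpl; lra.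
  by rewrite Rpower_pow; [simpl; field | lra].
rewrite hdd.
have : 2 * INR n * Rpower 2 (2 * s0) <= tauNBM n K0 L0 * Rpower 2 (2 * s0).
  by apply: Rmult_le_compat_r; lra.
nra.
Qed.

Lemma log2_ge1 n : (2 <= n)%N -> 1 <= log2 (INR n).
Proof.
move=> hn; rewrite /log2.
have h2 : 2 <= INR n by apply: (le_INR 2); apply/leP.
have hl2 : 0 < ln 2 by rewrite -ln_1; apply: ln_increasing; lra.
have : ln 2 <= ln (INR n) by apply: Rle_ln; lra.
move=> h; apply: (Rmult_le_reg_r (ln 2)) => //.
by rewrite Rmult_1_l Rmult_assoc Rinv_l; lra.
Qed.

Theorem lemma4 (n K L K0 L0 : nat) (s0 : R) (Ps : mat n)
  (hn : (2 <= n)%N)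
  (hL0 : (1 <= L0)%N) (hL0K0 : (L0 <= K0)%N) (hK0n : (K0 <= n)%N)
  (hL : (1 <= L)%N) (hLK : (L <= K)%N) (hKn : (K <= n)%N)
  (hs0 : 0 < s0)
  (hPs_sym : forall i j, Ps i j = Ps j i)
  (hPs_range : forall i j, 0 <= Ps i j <= 1) :
  prob Ps (fun A =>
    sup_ge0
      (fun P => @in_NBM n K L P /\
         frob (msub P Ps) >= C0 * Rpower 2 s0 * sqrt (tauNBM n K0 L0))
      (fun P => 2 * inner (msub A Ps) (msub P Ps)
                - / 2 * (frob (msub P Ps)) ^ 2
                - 2 * DeltaNBM n K L))
  <= log2 (INR n) * exp (- (INR n * Rpower 2 (2 * s0 - 7))).
Proof.
have hn1 : (1 <= n)%N by apply: leq_trans hn.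
have hK : (1 <= K)%N by apply: leq_trans hLK.
have hK0 : (1 <= K0)%N by apply: leq_trans hL0K0.
set Dl := DeltaNBM n K L.
set d := C0 * Rpower 2 s0 * sqrt (tauNBM n K0 L0).
set r := d * d / 2 - 1.
have hd : 0 <= d.
  apply: Rmult_le_pos; last exact: sqrt_pos.
  by apply: Rmult_le_pos; [exact: sqrt_pos | left; apply: exp_pos].
apply: Rle_trans (prob_union hPs_range
  (Et := fun t : net_index n K L => net_deviation Ps (net_point t) r Dl) _) _.
  by move=> a; apply: net_deviation_of_sup.
apply: Rle_trans (_ : _ <= \big[Rplus/0]_(t : net_index n K L)
  exp (- (r / 1024) - (Dl - 2) / 64)) _.
  by apply: leR_sum => t _; apply: prob_net_deviation.
rewrite sumR_const.
have hcard := card_net_index_le hn1 hK hL.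
have hrad := rate_le_radius hn1 hK0 hL0 (Rlt_le _ _ hs0) (erefl d).
have hlog := log2_ge1 hn.
apply: Rle_trans (_ : _ <= exp ((Dl - 2) / 64) * exp (- (r / 1024) - (Dl - 2) / 64)) _.
  by apply: Rmult_le_compat_r => //; left; apply: exp_pos.
rewrite -exp_plus.
apply: Rle_trans (_ : _ <= exp (- (INR n * Rpower 2 (2 * s0 - 7)))) _.
  by apply: Rle_exp; rewrite /r; lra.
by have := exp_pos (- (INR n * Rpower 2 (2 * s0 - 7))); nra.
Qed.
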